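(* In the reinforcement-learning network model described in the context, there exists an $(\mathcal{F}_n)$-adapted martingale increment process $(\eta_n)_{n\in\mathbb{N}}$ (i.e. $\eta_{n+1}$ is $\mathcal{F}_{n+1}$-measurable with $\mathbb{E}(\eta_{n+1}\mid\mathcal{F}_n)=0$) such that for all $n\in\mathbb{N}$ $$x_{n+1}-x_n=\frac{F(x_n)}{T_n}+\eta_{n+1}+\widetilde R_{n+1},$$ and, for all $n,k\in\mathbb{N}$, $$|\eta_{n+1}|\le\frac{2\sum_{i,j\in\mathbb{V}}a_{ij}}{T_n},\qquad\sum_{n\ge k}|\widetilde R_{n+1}|\le\frac{2\sum_{k,l\in\mathbb{V}}a_{kl}}{T_k},$$ where $|\cdot|$ is the $L^1$ norm on $\mathbb{R}^{\mathbb{V}\times\mathbb{V}}$.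
   Context: Let $G=(\mathbb{V},E)$ be a finite graph with adjacency $\sim$. Let $a_{ij}=a_{ji}\ge0$, $>0$ only if $i\sim j$. Let $(p_W)_{W\subseteq\mathbb{V}}$ be nonnegative with $\sum_Wp_W=1$; for $i\sim j$, $p_{ij}=\sum_{W:i,j\in W}p_W$; $p_{ij}=0$ if $i\not\sim j$. Assume some $a_{ij}p_{ij}>0$. Let $v^0_{ij}=v^0_{ji}\ge0$, $>0$ iff $i\sim j$. Process: $V^0_{ij}=v^0_{ij}$, $V^n_{ij}=0$ if $i\not\sim j$, $V^n_i=\sum_jV^n_{ij}$; at each time $n$ each vertex $i$ independently chooses a neighbour $j$ with probability $V^n_{ij}/V^n_i$; independently Nature picks $W_n$ with $\mathbb{P}(W_n=W)=p_W$, i.i.d.; if $i,j\in W_n$, $i\sim j$ and $i,j$ choose each other, then $V^{n+1}_{ij}=V^{n+1}_{ji}=V^n_{ij}+a_{ij}$, else unchanged; $\mathcal{F}_n$ is the natural filtration. Let $T_n=\sum_{i,j}V^n_{ij}$ (ordered pairs), $x^n_{ij}=V^n_{ij}/T_n$, $x_n=(x^n_{ij})$. For an array $x$ let $x_i=\sum_jx_{ij}$, $H(x)=\sum_{(i,j):x_{ij}>0}a_{ij}p_{ij}x_{ij}^2/(x_ix_j)$ and $F(x)_{ij}=x_{ij}\big(a_{ij}p_{ij}\frac{x_{ij}}{x_ix_j}-H(x)\big)$ ($F_{ij}=0$ if $x_{ij}=0$; $a_{ij}p_{ij}x_{ij}/(x_ix_j):=0$ if $a_{ij}p_{ij}=0$).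 Let $\Delta^{n+1}_{ij}=V^{n+1}_{ij}-V^n_{ij}$, $\Delta^{n+1}_T=T_{n+1}-T_n$ and $\widetilde R^{ij}_{n+1}=(\Delta^{n+1}_{ij}-x^n_{ij}\Delta^{n+1}_T)\big(\frac1{T_{n+1}}-\frac1{T_n}\big)$, $\widetilde R_{n+1}=(\widetilde R^{ij}_{n+1})_{i,j}$. *)

(* Canonical (path-space) model of the reinforcement
   process: the randomness at time n is the outcome
   w_n = (c_n, W_n) where c_n : V -> V records the neighbour chosen by
   each vertex and W_n is the set chosen by Nature.  A history is the
   sequence [w_0; ...; w_{n-1}] (oldest first); F_n-measurable random
   variables are functions of histories of length n. *)
From HB Require Import structures.
From mathcomp Require Import all_boot all_order all_algebra.
Set Implicit Arguments. Unset Strict Implicit. Unset Printing Implicit Defensive.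
Import Order.TTheory GRing.Theory Num.Theory.
Local Open Scope ring_scope.

Section Model.
Variables (R : realFieldType) (V : finType).

Definition arr := V -> V -> R.

Definition rowsum (x : arr) (i : V) : R := \sum_(j : V) x i j.

Definition Tsum (x : arr) : R := \sum_(i : V) \sum_(j : V) x i j.

Definition norm1 (x : arr) : R := \sum_(i : V) \sum_(j : V) `|x i j|.

Variables (adj : rel V) (a : V -> V -> R) (p : {set V} -> R).

Definition pij (i j : V) : R :=
  if adj i j then \sum_(W : {set V} | (i \in W) && (j \in W)) p W else 0.

Definition Hf (x : arr) : R :=
  \sum_(i : V) \sum_(j : V)
     (if 0 < x i j then a i j * pij i j * x i j ^+ 2 / (rowsum x i * rowsum x j)
      else 0).

Definition Ff (x : arr) : arr := fun i j =>
  if x i j == 0 then 0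
  else x i j * (a i j * pij i j * x i j / (rowsum x i * rowsum x j) - Hf x).

Definition Omega := ({ffun V -> V} * {set V})%type.

(* probability that vertex i chooses j given weights Vs
   (an isolated vertex, for which V_i = 0, "chooses" itself; this choice
   has no effect on the dynamics) *)
Definition qch (Vs : arr) (i j : V) : R :=
  if 0 < rowsum Vs i then Vs i j / rowsum Vs i else (j == i)%:R.

Definition trans (Vs : arr) (w : Omega) : R :=
  (\prod_(i : V) qch Vs i (w.1 i)) * p w.2.

Definition step (Vs : arr) (w : Omega) : arr := fun i j =>
  if [&& adj i j, i \in w.2, j \in w.2, w.1 i == j & w.1 j == i]
  then Vs i j + a i j else Vs i j.

Definition state (v0 : arr) (h : seq Omega) : arr := foldl step v0 h.

Fixpoint hprob (Vs : arr) (h : seq Omega) : R :=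
  match h with
  | [::] => 1
  | w :: h' => trans Vs w * hprob (step Vs w) h'
  end.

Definition xnorm (Vs : arr) : arr := fun i j => Vs i j / Tsum Vs.

Definition Rt (Vs Vs' : arr) : arr := fun i j =>
  ((Vs' i j - Vs i j) - xnorm Vs i j * (Tsum Vs' - Tsum Vs))
  * (1 / Tsum Vs' - 1 / Tsum Vs).

End Model.

(* Write V' = V + D for one reinforcement step, with 0 <= D <= a entrywise.  Then
   x' - x = (D - x sum D) / T', and splitting 1/T' = 1/T + (1/T' - 1/T) yields the
   martingale part (D - x sum D - E[D - x sum D]) / T, the remainder R~ and the drift
   E[D - x sum D] / T.  Since i and j reinforce their edge only when they choose each other
   and both lie in Nature's set, E[D_ij] = a_ij p_ij (V_ij/V_i)(V_ji/V_j), which turns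
   E[D - x sum D] into F(x).  Both D and x sum D have L^1 norm at most sum a, whence the
   bound on eta; and |R~_{n+1}| <= 2 sum a (1/T_n - 1/T_{n+1}) telescopes. *)
From HB Require Import structures.
From mathcomp Require Import all_boot all_order all_algebra.
From mathcomp Require Import ring lra.
Import Order.TTheory GRing.Theory Num.Theory.
Set Implicit Arguments. Unset Strict Implicit. Unset Printing Implicit Defensive.
Local Open Scope ring_scope.

Section ArrayNorms.
Variables (R : realFieldType) (V : finType).
Implicit Types (x D E : arr R V).

Lemma TsumD D E : Tsum (fun i j => D i j + E i j) = Tsum D + Tsum E.
Proof. by rewrite /Tsum -big_split; apply: eq_bigr => i _; rewrite -big_split. Qed.

Lemma TsumMr D c : Tsum (fun i j => D i j * c) = Tsum D * c.
Proof. by rewrite /Tsum big_distrl; apply: eq_bigr => i _; rewrite big_distrl. Qed.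

Lemma TsumMl D c : Tsum (fun i j => c * D i j) = c * Tsum D.
Proof. by rewrite /Tsum big_distrr; apply: eq_bigr => i _; rewrite big_distrr. Qed.

Lemma TsumB D E : Tsum (fun i j => D i j - E i j) = Tsum D - Tsum E.
Proof. by rewrite /Tsum -sumrB; apply: eq_bigr => i _; rewrite -sumrB. Qed.

Lemma Tsum_ge0 D : (forall i j, 0 <= D i j) -> 0 <= Tsum D.
Proof. by move=> D0; apply: sumr_ge0 => i _; apply: sumr_ge0. Qed.

Lemma ler_Tsum D E : (forall i j, D i j <= E i j) -> Tsum D <= Tsum E.
Proof. by move=> DE; apply: ler_sum => i _; apply: ler_sum. Qed.

Lemma ler_rowsum D : (forall i j, 0 <= D i j) -> forall i j, D i j <= rowsum D i.
Proof. by move=> D0 i j; rewrite /rowsum (bigD1 j) //= lerDl sumr_ge0. Qed.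

Lemma ler_entry_Tsum D : (forall i j, 0 <= D i j) -> forall i j, D i j <= Tsum D.
Proof.
move=> D0 i j; apply: (le_trans (ler_rowsum D0 i j)).
by rewrite /Tsum (bigD1 i) //= lerDl sumr_ge0 // => k _; apply: sumr_ge0.
Qed.

Lemma norm_Tsum_le D : `|Tsum D| <= norm1 D.
Proof.
apply: le_trans (ler_norm_sum _ _ _) _; apply: ler_sum => i _.
exact: ler_norm_sum.
Qed.

Lemma eq_norm1 D E : (forall i j, D i j = E i j) -> norm1 D = norm1 E.
Proof. by move=> DE; apply: eq_bigr => i _; apply: eq_bigr => j _; rewrite DE. Qed.

Lemma norm1_Mr D c : norm1 (fun i j => D i j * c) = norm1 D * `|c|.
Proof.
by rewrite -TsumMr; apply: eq_bigr => i _; apply: eq_bigr => j _; rewrite normrM.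
Qed.

Lemma xnorm_ge0 D : (forall i j, 0 <= D i j) -> 0 < Tsum D ->
  forall i j, 0 <= xnorm D i j.
Proof. by move=> D0 T0 i j; rewrite /xnorm divr_ge0 // ltW. Qed.

Lemma Tsum_xnorm D : 0 < Tsum D -> Tsum (xnorm D) = 1.
Proof.
by move=> T0; rewrite [LHS]TsumMr divff // lt0r_neq0.
Qed.

Lemma rowsum_xnorm D i : rowsum (xnorm D) i = rowsum D i / Tsum D.
Proof. by rewrite /rowsum /xnorm big_distrl. Qed.

Definition centered x D : arr R V := fun i j => D i j - x i j * Tsum D.

Lemma centeredB x D E i j :
  centered x D i j - centered x E i j = centered x (fun k l => D k l - E k l) i j.
Proof. by rewrite /centered TsumB; ring. Qed.

Lemma norm1_centered x D : (forall i j, 0 <= x i j) -> Tsum x = 1 ->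
  norm1 (centered x D) <= 2 * norm1 D.
Proof.
move=> x0 x1; apply: (@le_trans _ _ (Tsum (fun i j => `|D i j| + x i j * norm1 D))).
  apply: ler_Tsum => i j; apply: le_trans (ler_normB _ _) _; rewrite lerD2l.
  by rewrite normrM ger0_norm // ler_wpM2l // norm_Tsum_le.
by rewrite TsumD (TsumMr x) x1 mul1r -/(norm1 D) -[2]/(1 + 1) mulrDl mul1r.
Qed.

Lemma Tsum_sum (I : finType) (D : I -> arr R V) :
  Tsum (fun i j => \sum_v D v i j) = \sum_v Tsum (D v).
Proof.
by rewrite /Tsum; under eq_bigr do rewrite exchange_big; rewrite exchange_big.
Qed.

Lemma norm1_sub_mean (I : finType) (mu : I -> R) (Y : I -> arr R V) u c :
  (forall v, 0 <= mu v) -> \sum_v mu v = 1 ->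
  (forall v, norm1 (fun i j => Y u i j - Y v i j) <= c) ->
  norm1 (fun i j => Y u i j - \sum_v mu v * Y v i j) <= c.
Proof.
move=> mu0 mu1 Yc.
have meanE i j : Y u i j - \sum_v mu v * Y v i j = \sum_v mu v * (Y u i j - Y v i j).
  by rewrite [RHS](eq_bigr _ (fun v _ => mulrBr _ _ _)) sumrB -big_distrl /= mu1 mul1r.
apply: (@le_trans _ _ (Tsum (fun i j => \sum_v mu v * `|Y u i j - Y v i j|))).
  apply: ler_Tsum => i j; rewrite meanE; apply: le_trans (ler_norm_sum _ _ _) _.
  by apply: ler_sum => v _; rewrite normrM ger0_norm.
rewrite Tsum_sum -[c]mul1r -mu1 big_distrl /=; apply: ler_sum => v _.
by rewrite (TsumMl (fun i j => `|Y u i j - Y v i j|)) (ler_wpM2l (mu0 v) (Yc v)).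
Qed.

End ArrayNorms.

Lemma sum_pair_mul {R : comPzRingType} {I J : finType} (f : I -> R) (g : J -> R) :
  \sum_(w : I * J) f w.1 * g w.2 = (\sum_i f i) * (\sum_j g j).
Proof. by rewrite big_distrlr pair_big. Qed.

Section Kernel.
Variables (R : realFieldType) (V : finType) (adj : rel V) (a : V -> V -> R)
  (p : {set V} -> R).
Hypotheses (p_ge0 : forall W, 0 <= p W) (p_sum1 : \sum_W p W = 1).
Implicit Types (s : arr R V) (w : Omega V).

Lemma qch_sum1 s i : \sum_j qch s i j = 1.
Proof.
rewrite /qch; case: (ltrP 0 (rowsum s i)) => [s_i_gt0 | _].
  by rewrite -big_distrl /= divff ?gt_eqF.
by rewrite (bigD1 i) //= eqxx big1 ?addr0 // => j /negPf ->.
Qed.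

Lemma qch_ge0 s i j : (forall k l, 0 <= s k l) -> 0 <= qch s i j.
Proof. by move=> s0; rewrite /qch; case: ifP => [/ltW ? | _]; rewrite ?divr_ge0. Qed.

Lemma trans_ge0 s w : (forall k l, 0 <= s k l) -> 0 <= trans p s w.
Proof. by move=> s0; rewrite /trans mulr_ge0 ?prodr_ge0 // => k _; apply: qch_ge0. Qed.

Lemma trans_sum1 s : \sum_w trans p s w = 1.
Proof.
rewrite (sum_pair_mul (fun c : {ffun V -> V} => \prod_i qch s i (c i)) p) p_sum1 mulr1.
by rewrite -bigA_distr_bigA big1 // => i _; rewrite qch_sum1.
Qed.

(* The indicator factorises over the vertices, so the sum is a product of per-vertex sums. *)
Lemma sum_mutual_choice (q : V -> V -> R) i j : i != j ->
  (forall k, \sum_l q k l = 1) ->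
  \sum_(c : {ffun V -> V}) (\prod_k q k (c k)) * ((c i == j) && (c j == i))%:R
  = q i j * q j i.
Proof.
move=> neq_ij q1.
pose f k l : R := if k == i then (l == j)%:R else if k == j then (l == i)%:R else 1.
have mutualE c : ((c i == j) && (c j == i))%:R = \prod_k f k (c k).
  rewrite (bigD1 i) // (bigD1 j) /=; last by rewrite eq_sym.
  rewrite big1 => [|k /andP[/negPf ki /negPf kj]]; last by rewrite /f ki kj.
  by rewrite /f eqxx [j == i]eq_sym (negPf neq_ij) eqxx mulr1 -natrM mulnb.
under eq_bigr do rewrite mutualE -big_split /=.
rewrite -(bigA_distr_bigA (fun k l => q k l * f k l)) (bigD1 i) // (bigD1 j) /=;
  last by rewrite eq_sym.
have -> : \prod_(k | (k != i) && (k != j)) \sum_l q k l * f k l = 1.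
  apply: big1 => k /andP[/negPf ki /negPf kj].
  by rewrite /f ki kj; under eq_bigr do rewrite mulr1.
have pick k m : \sum_l q k l * (l == m)%:R = q k m.
  by rewrite (bigD1 m) //= eqxx mulr1 big1 ?addr0 // => l /negPf ->; rewrite mulr0.
by rewrite /f eqxx eq_sym (negPf neq_ij) eqxx !pick mulr1.
Qed.

Lemma expected_reinforcement s i j : irreflexive adj ->
  \sum_w trans p s w * (step adj a s w i j - s i j)
  = a i j * (qch s i j * qch s j i) * pij adj p i j.
Proof.
move=> irr; rewrite /pij; case adj_ij: (adj i j); last first.
  by rewrite mulr0 big1 // => w _; rewrite /step adj_ij subrr mulr0.
have neq_ij : i != j by apply: contraTneq adj_ij => ->; rewrite irr.
pose fc (c : {ffun V -> V}) := (\prod_k qch s k (c k)) * ((c i == j) && (c j == i))%:R.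
pose fW (W : {set V}) := p W * ((i \in W) && (j \in W))%:R.
transitivity (a i j * \sum_(w : Omega V) fc w.1 * fW w.2).
  rewrite big_distrr; apply: eq_bigr => -[c W] _; rewrite /trans /step /fc /fW adj_ij /=.
  by case: (i \in W); case: (j \in W); case: (c i == j); case: (c j == i) => /=; ring.
rewrite sum_pair_mul sum_mutual_choice // => [|k]; last exact: qch_sum1.
rewrite !mulrA; congr (_ * _); rewrite [RHS]big_mkcond; apply: eq_bigr => W _.
by rewrite /fW; case: (_ && _); rewrite ?mulr1 ?mulr0.
Qed.

End Kernel.

Section Drift.
Variables (R : realFieldType) (V : finType) (adj : rel V) (a : V -> V -> R)
  (p : {set V} -> R).
Implicit Types (s : arr R V) (w : Omega V).

Definition increment s w : arr R V := fun i j => step adj a s w i j - s i j.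

(* [centered_increment s w / Tsum (step adj a s w)] is the increment of [xnorm] along
   the step, and [noise] is the paper's martingale increment [eta_{n+1}]. *)
Definition centered_increment s w : arr R V := centered (xnorm s) (increment s w).

Definition mean_centered_increment s : arr R V :=
  fun i j => \sum_w trans p s w * centered_increment s w i j.

Definition noise s w : arr R V :=
  fun i j => (centered_increment s w i j - mean_centered_increment s i j) / Tsum s.

Hypothesis irr_adj : irreflexive adj.
Variable s : arr R V.
Hypotheses (s_ge0 : forall i j, 0 <= s i j) (s_sym : forall i j, s i j = s j i)
  (s_gt0_adj : forall i j, adj i j -> 0 < s i j) (Tsum_gt0 : 0 < Tsum s).

Lemma expected_increment i j :
  \sum_w trans p s w * increment s w i j
  = a i j * pij adj p i j * xnorm s i j ^+ 2
    / (rowsum (xnorm s) i * rowsum (xnorm s) j).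
Proof.
rewrite expected_reinforcement //; case adj_ij: (adj i j); last first.
  by rewrite /pij adj_ij !mulr0 !mul0r.
have s_ij_gt0 := s_gt0_adj adj_ij.
have s_i_gt0 : 0 < rowsum s i by apply: lt_le_trans s_ij_gt0 (ler_rowsum s_ge0 _ _).
have s_j_gt0 : 0 < rowsum s j.
  by rewrite s_sym in s_ij_gt0; apply: lt_le_trans s_ij_gt0 (ler_rowsum s_ge0 _ _).
rewrite /qch s_i_gt0 s_j_gt0 !rowsum_xnorm /xnorm (s_sym j i).
by field; rewrite ?gt_eqF.
Qed.

Lemma mean_centered_incrementE i j :
  mean_centered_increment s i j = Ff adj a p (xnorm s) i j.
Proof.
pose e k l := \sum_w trans p s w * increment s w k l.
have meanE : mean_centered_increment s i j = e i j - xnorm s i j * Tsum e.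
  rewrite /mean_centered_increment /centered_increment /centered.
  under eq_bigr do rewrite mulrBr mulrCA.
  rewrite sumrB -big_distrr /=; congr (_ - _ * _).
  by rewrite /e Tsum_sum; apply: eq_bigr => w _; rewrite TsumMl.
have HfE : Hf adj a p (xnorm s) = Tsum e.
  apply: eq_bigr => k _; apply: eq_bigr => l _; rewrite /e expected_increment.
  case: ifP => // x_kl_gt0.
  have := xnorm_ge0 s_ge0 Tsum_gt0 k l; rewrite le_eqVlt x_kl_gt0 orbF => /eqP <-.
  by rewrite expr2 !mul0r mulr0 mul0r.
rewrite meanE /Ff HfE /e expected_increment.
by case: ifP => [/eqP -> | _]; ring.
Qed.

End Drift.

Section Bounds.
Variables (R : realFieldType) (V : finType) (adj : rel V) (a : V -> V -> R)
  (p : {set V} -> R).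
Hypotheses (a_ge0 : forall i j, 0 <= a i j)
  (p_ge0 : forall W, 0 <= p W) (p_sum1 : \sum_W p W = 1).
Implicit Types (s : arr R V) (w : Omega V).

Lemma increment_bounds s w i j : 0 <= increment adj a s w i j <= a i j.
Proof.
rewrite /increment /step; case: ifP => _; last by rewrite subrr lexx a_ge0.
by rewrite addrAC subrr add0r lexx andbT.
Qed.

Lemma ler_step s w i j : s i j <= step adj a s w i j.
Proof. by rewrite -subr_ge0; case/andP: (increment_bounds s w i j). Qed.

Lemma Tsum_increment s w : Tsum (increment adj a s w) = Tsum (step adj a s w) - Tsum s.
Proof. exact: TsumB. Qed.

Lemma norm1_increment s w : norm1 (increment adj a s w) <= Tsum a.
Proof.
apply: ler_Tsum => i j; have /andP[inc_ge0 inc_le] := increment_bounds s w i j.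
by rewrite ger0_norm.
Qed.

Lemma norm1_incrementB s w w' :
  norm1 (fun i j => increment adj a s w i j - increment adj a s w' i j) <= Tsum a.
Proof.
apply: ler_Tsum => i j; rewrite ler_norml.
have /andP[? ?] := increment_bounds s w i j; have /andP[? ?] := increment_bounds s w' i j.
by apply/andP; split; lra.
Qed.

Lemma sum_trans_noise s i j : \sum_w trans p s w * noise adj a p s w i j = 0.
Proof.
under eq_bigr do rewrite /noise mulrA mulrBr.
rewrite -big_distrl /= sumrB -big_distrl /= trans_sum1 // mul1r.
by rewrite subrr mul0r.
Qed.

Variable s : arr R V.
Hypotheses (s_ge0 : forall i j, 0 <= s i j) (Tsum_gt0 : 0 < Tsum s).

Lemma norm1_noise w : norm1 (noise adj a p s w) <= 2 * Tsum a / Tsum s.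
Proof.
have invT_gt0 : 0 < (Tsum s)^-1 by rewrite invr_gt0.
rewrite /noise norm1_Mr gtr0_norm // ler_pM2r //.
have [x_ge0 x_sum1] := (xnorm_ge0 s_ge0 Tsum_gt0, Tsum_xnorm Tsum_gt0).
apply: norm1_sub_mean => [w'||w'].
- exact: trans_ge0.
- exact: trans_sum1.
rewrite (@eq_norm1 _ _ _ (centered (xnorm s)
  (fun k l => increment adj a s w k l - increment adj a s w' k l))); last exact: centeredB.
apply: le_trans (norm1_centered _ x_ge0 x_sum1) _.
by rewrite ler_pM2l // norm1_incrementB.
Qed.

Lemma Tsum_step_gt0 w : 0 < Tsum (step adj a s w).
Proof. exact: lt_le_trans Tsum_gt0 (ler_Tsum (ler_step s w)). Qed.

Lemma norm1_Rt w :
  norm1 (Rt s (step adj a s w)) <= 2 * Tsum a * (1 / Tsum s - 1 / Tsum (step adj a s w)).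
Proof.
have T'_gt0 := Tsum_step_gt0 w.
have inv_le : 1 / Tsum (step adj a s w) <= 1 / Tsum s.
  by rewrite !div1r lef_pV2 ?posrE // ler_Tsum // => i j; apply: ler_step.
have [x_ge0 x_sum1] := (xnorm_ge0 s_ge0 Tsum_gt0, Tsum_xnorm Tsum_gt0).
rewrite (@eq_norm1 _ _ _ (fun i j => centered_increment adj a s w i j
  * (1 / Tsum (step adj a s w) - 1 / Tsum s))); last first.
  by move=> i j; rewrite /Rt /centered_increment /centered Tsum_increment.
rewrite norm1_Mr ler0_norm ?subr_le0 // opprB ler_wpM2r ?subr_ge0 //.
apply: le_trans (norm1_centered _ x_ge0 x_sum1) _.
by rewrite ler_pM2l // norm1_increment.
Qed.

Lemma xnorm_step_decomposition w i j :
  irreflexive adj -> (forall i j, s i j = s j i) -> (forall i j, adj i j -> 0 < s i j) ->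
  xnorm (step adj a s w) i j - xnorm s i j
  = Ff adj a p (xnorm s) i j / Tsum s + noise adj a p s w i j + Rt s (step adj a s w) i j.
Proof.
move=> irr s_sym s_gt0_adj; have T'_gt0 := Tsum_step_gt0 w.
rewrite -mean_centered_incrementE // /noise /Rt /centered_increment /centered.
rewrite Tsum_increment /increment /xnorm.
by field; rewrite ?gt_eqF.
Qed.

End Bounds.

Lemma step_sym (R : realFieldType) (V : finType) (adj : rel V) (a : V -> V -> R) s w :
  symmetric adj -> (forall i j, a i j = a j i) -> (forall i j, s i j = s j i) ->
  forall i j, step adj a s w i j = step adj a s w j i.
Proof.
move=> adj_sym a_sym s_sym i j; rewrite /step adj_sym a_sym s_sym.
by case: (adj j i); case: (i \in w.2); case: (j \in w.2); case: (w.1 i == j); case: (w.1 j == i).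
Qed.

Lemma state_rcons (R : realFieldType) (V : finType) (adj : rel V) (a : V -> V -> R) v0 h w :
  state adj a v0 (rcons h w) = step adj a (state adj a v0 h) w.
Proof. by rewrite /state foldl_rcons. Qed.

Lemma take_size_rcons (T : Type) (h : seq T) w : take (size (rcons h w)).-1 (rcons h w) = h.
Proof. by rewrite size_rcons -cats1 take_size_cat. Qed.

Section Trajectory.
Variables (R : realFieldType) (V : finType) (adj : rel V) (a : V -> V -> R)
  (v0 : arr R V).
Hypotheses (adj_sym : symmetric adj) (a_sym : forall i j, a i j = a j i)
  (a_ge0 : forall i j, 0 <= a i j) (v0_sym : forall i j, v0 i j = v0 j i)
  (v0_ge0 : forall i j, 0 <= v0 i j) (Tsum_v0_gt0 : 0 < Tsum v0).
Implicit Type h : seq (Omega V).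

Lemma state_sym h i j : state adj a v0 h i j = state adj a v0 h j i.
Proof.
rewrite /state; elim: h v0 v0_sym => [|w h IH] s s_sym //=.
exact/IH/step_sym.
Qed.

Lemma ler_state h i j : v0 i j <= state adj a v0 h i j.
Proof.
rewrite /state; elim: h v0 => [|w h IH] s //=.
exact: le_trans (ler_step _ a_ge0 s w i j) (IH _).
Qed.

Lemma state_ge0 h i j : 0 <= state adj a v0 h i j.
Proof. exact: le_trans (v0_ge0 i j) (ler_state h i j). Qed.

Lemma Tsum_state_gt0 h : 0 < Tsum (state adj a v0 h).
Proof. exact: lt_le_trans Tsum_v0_gt0 (ler_Tsum (ler_state h)). Qed.

Lemma sum_norm1_Rt_state h k : (k <= size h)%N ->
  \sum_(k <= n < size h)
     norm1 (Rt (state adj a v0 (take n h)) (state adj a v0 (take n.+1 h)))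
  <= 2 * Tsum a / Tsum (state adj a v0 (take k h)).
Proof.
move=> le_k_h; pose w0 : Omega V := ([ffun v => v], set0).
pose u n := 1 / Tsum (state adj a v0 (take n h)).
apply: (@le_trans _ _ (\sum_(k <= n < size h) 2 * Tsum a * (u n - u n.+1))).
  apply: ler_sum_nat => n /andP[_ lt_n_h].
  rewrite /u (take_nth w0 lt_n_h) state_rcons.
  exact: norm1_Rt (state_ge0 _) (Tsum_state_gt0 _) _.
rewrite -big_distrr /= (@telescope_sumr_eq _ _ _ (fun n => - u n)) // => [|n _]; last first.
  by rewrite opprK addrC.
have u_ge0 : 0 <= u (size h) by rewrite divr_ge0 // ltW // Tsum_state_gt0.
apply: (@le_trans _ _ (2 * Tsum a * u k)); last by rewrite /u div1r.
apply: ler_wpM2l; first by rewrite mulr_ge0 ?Tsum_ge0.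
lra.
Qed.

End Trajectory.

Theorem lemma1 (R : realFieldType) (V : finType) (adj : rel V)
  (a : V -> V -> R) (p : {set V} -> R) (v0 : V -> V -> R) :
  symmetric adj -> irreflexive adj ->
  (forall i j, a i j = a j i) -> (forall i j, 0 <= a i j) ->
  (forall i j, 0 < a i j -> adj i j) ->
  (forall W, 0 <= p W) -> \sum_(W : {set V}) p W = 1 ->
  (exists i j, 0 < a i j * pij adj p i j) ->
  (forall i j, v0 i j = v0 j i) -> (forall i j, 0 <= v0 i j) ->
  (forall i j, 0 < v0 i j <-> adj i j) ->
  exists eta : seq (Omega V) -> V -> V -> R,
    (* martingale increment: E(eta_{n+1} | F_n) = 0 *)
    (forall h : seq (Omega V), 0 < hprob adj a p v0 h ->
       forall i j,
         \sum_(w : Omega V) trans p (state adj a v0 h) w * eta (rcons h w) i j = 0)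
    /\
    (* decomposition and bound on eta_{n+1}, a.s. *)
    (forall (h : seq (Omega V)) (w : Omega V),
       0 < hprob adj a p v0 (rcons h w) ->
       let s := state adj a v0 h in
       let s' := step adj a s w in
       (forall i j,
          xnorm s' i j - xnorm s i j
          = Ff adj a p (xnorm s) i j / Tsum s + eta (rcons h w) i j + Rt s s' i j)
       /\ norm1 (eta (rcons h w)) <= 2 * (\sum_(i : V) \sum_(j : V) a i j) / Tsum s)
    /\
    (* sum_{n >= k} |R~_{n+1}| <= 2 sum a / T_k, a.s. (partial sums) *)
    (forall (h : seq (Omega V)) (k : nat),
       0 < hprob adj a p v0 h -> (k <= size h)%N ->
       \sum_(k <= n < size h)
          norm1 (Rt (state adj a v0 (take n h)) (state adj a v0 (take n.+1 h)))
       <= 2 * (\sum_(i : V) \sum_(j : V) a i j) / Tsum (state adj a v0 (take k h))).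
Proof.
move=> adj_sym irr a_sym a_ge0 _ p_ge0 p_sum1 [i0 [j0 apij_gt0]] v0_sym v0_ge0 v0_pos.
have adj_i0j0 : adj i0 j0.
  by apply: contraTT apij_gt0; rewrite /pij => /negPf ->; rewrite mulr0 ltxx.
have Tsum_v0_gt0 : 0 < Tsum v0.
  exact: lt_le_trans ((v0_pos i0 j0).2 adj_i0j0) (ler_entry_Tsum v0_ge0 i0 j0).
have state_gt0_adj h i j : adj i j -> 0 < state adj a v0 h i j.
  by move=> /v0_pos v0_ij_gt0; apply: lt_le_trans v0_ij_gt0 (ler_state adj v0 a_ge0 h i j).
pose w0 : Omega V := ([ffun v => v], set0).
exists (fun h => noise adj a p (state adj a v0 (take (size h).-1 h)) (last w0 h)).
split; [|split].
- move=> h _ i j; under eq_bigr do rewrite take_size_rcons last_rcons.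
  exact: sum_trans_noise.
- move=> h w _ /=; rewrite take_size_rcons last_rcons; split.
    move=> i j; apply: xnorm_step_decomposition => //.
    + exact: state_ge0.
    + exact: Tsum_state_gt0.
    + exact: state_sym.
    + exact: state_gt0_adj.
  apply: norm1_noise => //; [exact: state_ge0 | exact: Tsum_state_gt0].
- by move=> h k _; apply: sum_norm1_Rt_state.
Qed.
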